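(* Let $n\geq1$ be an integer and $z\in\mathbb{C}$ with $|z|<1$. Put $p=(n+1)(1-|z|)$ and \[ m(p)=\begin{cases}(e\,p)^{-1}, & p\geq e^{-1},\\ |\log p|, & p<e^{-1}.\end{cases} \] Then $|R_n(z)|<m(p)$.
   Context: $R_n(z)=\sum_{k=n+1}^\infty \frac{z^k}{k}$, the tail of the Taylor series of $-\log(1-z)$. *)

From Stdlib Require Import Reals.
From Coquelicot Require Import Coquelicot.
Open Scope R_scope.

Definition logterm (z : C) (k : nat) : C := Cdiv (Cpow z k) (RtoC (INR k)).

(* R_n(z) = sum_{k=n+1}^oo z^k / k.  Coquelicot's total [Series] is real-valued,
   so the complex sum is assembled from the (real) series of real and imaginary
   parts of the terms z^(n+1+j)/(n+1+j), j >= 0 (both converge absolutely for |z|<1). *)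
Definition Rtail (n : nat) (z : C) : C :=
  (Series (fun j : nat => fst (logterm z (n + 1 + j)%nat)),
   Series (fun j : nat => snd (logterm z (n + 1 + j)%nat))).

Definition mfun (p : R) : R :=
  if Rle_dec (/ exp 1) p then / (exp 1 * p) else Rabs (ln p).

From Stdlib Require Import Reals Lra Lia Psatz.
From Coquelicot Require Import Coquelicot.
Open Scope R_scope.

(* Put x = |z| and N = n + 1, so p = N (1 - x).  By the triangle inequality it suffices to
   bound the real tail T(x) = sum_{k >= N} x^k / k.

   If c >= 0 and c (1 - x + c) <= p (x - c), then b_k = x^k / ((1 - x) k + c) satisfies
   x^k / k <= b_k - b_{k+1} for k >= N, so T(x) <= x^N / (p + c), while x^N < e^{-p}.
   For p >= 1 the choice c = 0 gives T(x) < 1 / (e p).  For 1/e <= p < 1 the choice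
   p + c = p / P, with P = 1/3 + p/2 + p^3/6 <= e^{p-1} the cubic Taylor bound, works
   because N >= 2, and again gives T(x) < 1 / (e p).

   For p < 1/e, T'(x) <= 1 / (1 - x), so T(x) + ln (1 - x) is nonincreasing in x.
   At the point x0 where N (1 - x0) = 1/e the previous case gives T(x0) < 1, and
   ln (1 - x0) = -1 - ln N, hence T(x) < -ln (N (1 - x)) = |ln p|. *)

Lemma Series_le_Series (a b : nat -> R) :
  (forall k, a k <= b k) -> ex_series a -> ex_series b -> Series a <= Series b.
Proof.
  intros Hab Ha Hb.
  apply (is_lim_seq_le (sum_n a) (sum_n b) (Series a) (Series b)).
  - intros M. apply sum_n_m_le, Hab.
  - apply Series_correct, Ha.
  - apply Series_correct, Hb.
Qed.

Lemma Series_le_telescoping (f g : nat -> R) :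
  ex_series f -> (forall j, 0 <= g j) -> (forall j, f j <= g j - g (S j)) ->
  Series f <= g O.
Proof.
  intros Hf Hg Hfg.
  assert (Hpartial : forall M, sum_n f M <= g O - g (S M)).
  { induction M as [|M IH].
    - rewrite sum_O. apply Hfg.
    - rewrite sum_Sn. specialize (Hfg (S M)). change plus with Rplus. lra. }
  apply (is_lim_seq_le (sum_n f) (fun _ => g O) (Series f) (g O)).
  - intros M. specialize (Hpartial M). specialize (Hg (S M)). lra.
  - apply Series_correct, Hf.
  - apply is_lim_seq_const.
Qed.

Lemma Cmod_Series_le (w : nat -> C) :
  ex_series (fun j => Cmod (w j)) ->
  Cmod (Series (fun j => fst (w j)), Series (fun j => snd (w j)))
    <= Series (fun j => Cmod (w j)).
Proof.
  intros Hw.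
  set (T := Series (fun j => Cmod (w j))).
  assert (Hre : ex_series (fun j => fst (w j))).
  { apply (ex_series_le (V := R_CompleteNormedModule)) with (2 := Hw).
    intros j. apply re_le_Cmod. }
  assert (Him : ex_series (fun j => snd (w j))).
  { apply (ex_series_le (V := R_CompleteNormedModule)) with (2 := Hw).
    intros j. eapply Rle_trans; [apply Rmax_r | apply Rmax_Cmod]. }
  set (R1 := Series (fun j => fst (w j))).
  set (R2 := Series (fun j => snd (w j))).
  set (M := Cmod (R1, R2)).
  assert (HM : 0 <= M) by apply Cmod_ge_0.
  assert (HT : 0 <= T).
  { unfold T. rewrite <- (Rmult_0_l (Series (fun j => Cmod (w j)))), <- Series_scal_l.
    apply Series_le; [intros j; generalize (Cmod_ge_0 (w j)); lra | exact Hw]. }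
  (* With S = (R1, R2): |S|^2 = Re (conj S * sum w) = sum Re (conj S * w_j) <= |S| * sum |w_j| *)
  assert (HM2 : M * M <= M * T).
  { replace (M * M) with (R1 * R1 + R2 * R2)
      by (generalize (Cmod2_alt (R1, R2)); fold M; unfold Re, Im; simpl; lra).
    unfold R1 at 2, R2 at 2, T.
    rewrite <- !Series_scal_l, <- Series_plus
      by first [exact (ex_series_scal_l R1 _ Hre) | exact (ex_series_scal_l R2 _ Him)].
    apply Series_le_Series.
    - intros j. generalize (re_le_Cmod (Cconj (R1, R2) * w j)%C).
      rewrite Cmod_mult, Cmod_conj. fold M.
      destruct (w j) as [w1 w2]. simpl. intros H. apply Rabs_le_between in H. lra.
    - exact (ex_series_plus _ _ (ex_series_scal_l R1 _ Hre) (ex_series_scal_l R2 _ Him)).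
    - exact (ex_series_scal_l M _ Hw). }
  nra.
Qed.

Definition log_tail (n : nat) (x : R) : R :=
  Series (fun j => x ^ (n + 1 + j) / INR (n + 1 + j)).

Lemma ex_series_log_tail (n : nat) (x : R) : 0 <= x < 1 ->
  ex_series (fun j => x ^ (n + 1 + j) / INR (n + 1 + j)).
Proof.
  intros Hx.
  apply (ex_series_le (V := R_CompleteNormedModule)) with (b := fun j => x ^ j).
  - intros j.
    assert (Hinv : 0 < / INR (n + 1 + j) <= 1).
    { assert (Hk : 1 <= INR (n + 1 + j)) by (apply (le_INR 1); lia).
      split; [apply Rinv_0_lt_compat; lra |].
      rewrite <- Rinv_1. apply Rinv_le_contravar; lra. }
    assert (Hpow : x ^ (n + 1 + j) <= x ^ j).
    { replace (n + 1 + j)%nat with (j + (n + 1))%nat by lia.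
      rewrite pow_add.
      assert (0 <= x ^ j) by (apply pow_le; lra).
      assert (x ^ (n + 1) <= 1 ^ (n + 1)) by (apply pow_incr; lra).
      rewrite pow1 in *. nra. }
    assert (0 <= x ^ (n + 1 + j)) by (apply pow_le; lra).
    change (norm _) with (Rabs (x ^ (n + 1 + j) / INR (n + 1 + j))).
    unfold Rdiv. rewrite Rabs_pos_eq; nra.
  - apply ex_series_geom. rewrite Rabs_pos_eq; lra.
Qed.

Lemma Cmod_logterm (z : C) (k : nat) : (1 <= k)%nat ->
  Cmod (logterm z k) = Cmod z ^ k / INR k.
Proof.
  intros Hk. unfold logterm.
  assert (Hkpos : 0 < INR k) by (apply lt_0_INR; lia).
  rewrite Cmod_div.
  - rewrite Cmod_pow, Cmod_R, Rabs_pos_eq; lra.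
  - intros H. injection H. lra.
Qed.

Lemma Cmod_Rtail_le (n : nat) (z : C) : Cmod z < 1 ->
  Cmod (Rtail n z) <= log_tail n (Cmod z).
Proof.
  intros Hz.
  assert (Hmod : forall j, Cmod (logterm z (n + 1 + j)) =
                           Cmod z ^ (n + 1 + j) / INR (n + 1 + j))
    by (intros j; apply Cmod_logterm; lia).
  unfold log_tail. rewrite <- (Series_ext _ _ Hmod).
  apply Cmod_Series_le.
  apply (ex_series_ext _ _ (fun j => eq_sym (Hmod j))).
  apply ex_series_log_tail. split; [apply Cmod_ge_0 | exact Hz].
Qed.

Lemma inv_le_shifted_inv_sub (a c k : R) :
  0 < a -> 0 < k -> 0 <= c -> c * (a + c) <= a * k * (1 - a - c) ->
  / k <= / (a * k + c) - (1 - a) / (a * (k + 1) + c).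
Proof.
  intros Ha Hk Hc H.
  assert (Hden : 0 < k * (a * k + c) * (a * (k + 1) + c))
    by (repeat apply Rmult_lt_0_compat; nra).
  assert (E : / (a * k + c) - (1 - a) / (a * (k + 1) + c) - / k =
              (a * k * (1 - a - c) - c * (a + c)) / (k * (a * k + c) * (a * (k + 1) + c)))
    by (field; nra).
  assert (0 <= (a * k * (1 - a - c) - c * (a + c)) / (k * (a * k + c) * (a * (k + 1) + c)))
    by (apply Rdiv_le_0_compat; lra).
  lra.
Qed.

Lemma log_tail_le (n : nat) (x c : R) :
  0 <= x < 1 -> 0 <= c -> c * (1 - x + c) <= INR (n + 1) * (1 - x) * (x - c) ->
  log_tail n x <= x ^ (n + 1) / (INR (n + 1) * (1 - x) + c).
Proof.
  intros Hx Hc Hcond.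
  set (N := INR (n + 1)) in *.
  assert (HN : 1 <= N) by (apply (le_INR 1); lia).
  assert (Hp : 0 < N * (1 - x)) by nra.
  assert (Hcx : c <= x) by nra.
  rewrite <- (Nat.add_0_r (n + 1)) at 1.
  replace (N * (1 - x) + c) with ((1 - x) * INR (n + 1 + 0) + c)
    by (rewrite Nat.add_0_r; unfold N; ring).
  apply (Series_le_telescoping _
           (fun j => x ^ (n + 1 + j) / ((1 - x) * INR (n + 1 + j) + c))).
  - apply ex_series_log_tail, Hx.
  - intros j. apply Rdiv_le_0_compat; [apply pow_le; lra |].
    assert (N <= INR (n + 1 + j)) by (apply le_INR; lia). nra.
  - intros j.
    set (k := INR (n + 1 + j)).
    assert (HNk : N <= k) by (apply le_INR; lia).
    replace (n + 1 + S j)%nat with (S (n + 1 + j)) by lia.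
    rewrite S_INR. fold k. simpl pow.
    assert (0 <= x ^ (n + 1 + j)) by (apply pow_le; lra).
    assert (Hstep : / k <= / ((1 - x) * k + c) - (1 - (1 - x)) / ((1 - x) * (k + 1) + c)).
    { apply inv_le_shifted_inv_sub; try lra.
      assert (0 <= (k - N) * ((1 - x) * (x - c))) by (apply Rmult_le_pos; nra).
      nra. }
    replace (1 - (1 - x)) with x in Hstep by ring.
    unfold Rdiv in *.
    replace (x * x ^ (n + 1 + j) * / ((1 - x) * (k + 1) + c))
      with (x ^ (n + 1 + j) * (x * / ((1 - x) * (k + 1) + c))) by ring.
    rewrite <- Rmult_minus_distr_l.
    apply Rmult_le_compat_l; assumption.
Qed.

Lemma le_of_is_derive_nonneg (f df : R -> R) (a b : R) : a <= b ->
  (forall x, a <= x <= b -> is_derive f x (df x)) ->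
  (forall x, a <= x <= b -> 0 <= df x) -> f a <= f b.
Proof.
  intros Hab Hd Hpos.
  destruct (MVT_gen f a b df) as [c [Hc Heq]];
    rewrite ?Rmin_left, ?Rmax_right in * by lra.
  - intros x Hx. apply Hd. lra.
  - intros x Hx. apply continuity_pt_filterlim, (ex_derive_continuous (V := R_NormedModule)).
    exists (df x). apply Hd. lra.
  - assert (0 <= df c * (b - a)) by (apply Rmult_le_pos; [apply Hpos | ]; lra).
    lra.
Qed.

Lemma exp_neg_le_quadratic (y : R) : 0 <= y -> exp (- y) <= 1 - y + y ^ 2 / 2.
Proof.
  intros Hy.
  enough ((1 - 0 + 0 ^ 2 / 2) - exp (- 0) <= (1 - y + y ^ 2 / 2) - exp (- y)) by
    (rewrite Ropp_0, exp_0 in *; lra).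
  apply (le_of_is_derive_nonneg (fun t => 1 - t + t ^ 2 / 2 - exp (- t))
           (fun t => t - 1 + exp (- t))); [lra | |].
  - intros t _. auto_derive; [exact I | field].
  - intros t _. generalize (exp_ineq1_le (- t)). lra.
Qed.

Lemma exp_neg_ge_cubic (y : R) : 0 <= y -> 1 - y + y ^ 2 / 2 - y ^ 3 / 6 <= exp (- y).
Proof.
  intros Hy.
  enough (exp (- 0) - (1 - 0 + 0 ^ 2 / 2 - 0 ^ 3 / 6)
          <= exp (- y) - (1 - y + y ^ 2 / 2 - y ^ 3 / 6)) by
    (rewrite Ropp_0, exp_0 in *; lra).
  apply (le_of_is_derive_nonneg (fun t => exp (- t) - (1 - t + t ^ 2 / 2 - t ^ 3 / 6))
           (fun t => 1 - t + t ^ 2 / 2 - exp (- t))); [lra | |].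
  - intros t _. auto_derive; [exact I | field].
  - intros t Ht. generalize (exp_neg_le_quadratic t (proj1 Ht)). lra.
Qed.

Lemma pow_lt_exp_neg (n : nat) (x : R) : 0 <= x < 1 ->
  x ^ (n + 1) < exp (- (INR (n + 1) * (1 - x))).
Proof.
  intros Hx.
  assert (Hlt : x < exp (- (1 - x))) by (generalize (exp_ineq1 (- (1 - x)) ltac:(lra)); lra).
  replace (- (INR (n + 1) * (1 - x))) with (INR (n + 1) * ln (exp (- (1 - x))))
    by (rewrite ln_exp; ring).
  change (exp _) with (Rpower (exp (- (1 - x))) (INR (n + 1))).
  rewrite Rpower_pow by apply exp_pos.
  replace (n + 1)%nat with (S n) by lia. simpl pow.
  assert (0 <= x ^ n <= exp (- (1 - x)) ^ n) by (split; [apply pow_le | apply pow_incr]; lra).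
  assert (0 < exp (- (1 - x)) ^ n) by (apply pow_lt, exp_pos).
  nra.
Qed.

Lemma log_tail_lt_of_ge_1 (n : nat) (x : R) : 0 <= x < 1 ->
  1 <= INR (n + 1) * (1 - x) ->
  log_tail n x < / (exp 1 * (INR (n + 1) * (1 - x))).
Proof.
  intros Hx Hp.
  set (p := INR (n + 1) * (1 - x)) in *.
  assert (Htail : log_tail n x <= x ^ (n + 1) / (p + 0))
    by (apply log_tail_le; fold p; nra).
  assert (Hexp : exp (- p) <= / exp 1).
  { rewrite <- exp_Ropp.
    destruct (Rle_lt_or_eq_dec 1 p Hp) as [Hlt | <-];
      [left; apply exp_increasing; lra | right; reflexivity]. }
  generalize (pow_lt_exp_neg n x Hx). fold p. intros Hpow.
  rewrite Rplus_0_r in Htail. rewrite Rinv_mult.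
  apply (Rle_lt_trans _ _ _ Htail), Rmult_lt_compat_r; [apply Rinv_0_lt_compat |]; lra.
Qed.

Lemma log_tail_lt_of_le_1 (n : nat) (x : R) : (1 <= n)%nat -> 0 <= x < 1 ->
  1 / 3 <= INR (n + 1) * (1 - x) <= 1 ->
  log_tail n x < / (exp 1 * (INR (n + 1) * (1 - x))).
Proof.
  intros Hn Hx Hp.
  set (p := INR (n + 1) * (1 - x)) in *.
  assert (Hx2 : 1 - x <= p / 2).
  { assert (2 <= INR (n + 1)) by (apply (le_INR 2); lia). unfold p. nra. }
  (* P is the cubic Taylor lower bound of exp (p - 1); the shift is c = q - p with q = p / P. *)
  set (P := 1 / 3 + p / 2 + p ^ 3 / 6).
  assert (HP : 1 / 3 <= P <= 1) by (unfold P; split; nra).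
  assert (HPexp : P <= exp (- (1 - p))).
  { replace P with (1 - (1 - p) + (1 - p) ^ 2 / 2 - (1 - p) ^ 3 / 6) by (unfold P; field).
    apply exp_neg_ge_cubic. lra. }
  assert (Hquad : p * (1 - P / 2) <= P ^ 2).
  { assert (0 <= (p - 1 / 2) ^ 2) by apply pow2_ge_0. unfold P. nra. }
  set (q := p / P).
  assert (HqP : q * P = p) by (unfold q; field; lra).
  assert (Hpq : p <= q) by nra.
  assert (Hq : q * (q - p / 2) <= p).
  { apply (Rmult_le_reg_r (P * P)); [nra |].
    replace (q * (q - p / 2) * (P * P)) with (p * (p * (1 - P / 2))) by (unfold q; field; lra).
    nra. }
  assert (Htail : log_tail n x <= x ^ (n + 1) / (p + (q - p))).
  { apply log_tail_le; fold p; [exact Hx | lra | nra]. }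
  replace (p + (q - p)) with q in Htail by ring.
  generalize (pow_lt_exp_neg n x Hx). fold p. intros Hpow.
  assert (Hexp : exp (- p) * P <= / exp 1).
  { apply (Rle_trans _ (exp (- p) * exp (- (1 - p)))).
    - apply Rmult_le_compat_l; [left; apply exp_pos | exact HPexp].
    - rewrite <- exp_plus, <- exp_Ropp. right. f_equal. ring. }
  apply (Rle_lt_trans _ _ _ Htail).
  replace (x ^ (n + 1) / q) with (x ^ (n + 1) * P * / p) by (unfold q; field; lra).
  rewrite Rinv_mult.
  apply Rmult_lt_compat_r; [apply Rinv_0_lt_compat; lra | nra].
Qed.

Lemma log_tail_lt_inv_exp_mul (n : nat) (x : R) : (1 <= n)%nat -> 0 <= x < 1 ->
  / exp 1 <= INR (n + 1) * (1 - x) ->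
  log_tail n x < / (exp 1 * (INR (n + 1) * (1 - x))).
Proof.
  intros Hn Hx Hp.
  destruct (Rle_lt_dec 1 (INR (n + 1) * (1 - x))) as [Hge | Hlt].
  - apply log_tail_lt_of_ge_1; assumption.
  - apply log_tail_lt_of_le_1; try assumption. split; [| lra].
    apply (Rle_trans _ (/ exp 1)); [| exact Hp].
    replace (1 / 3) with (/ 3) by field.
    apply Rinv_le_contravar; [apply exp_pos | apply exp_le_3].
Qed.

Definition log_tail_coef (n k : nat) : R := if Nat.ltb n k then / INR k else 0.

Lemma log_tail_coef_bounds (n k : nat) : 0 <= log_tail_coef n k <= 1.
Proof.
  unfold log_tail_coef. destruct (Nat.ltb_spec n k) as [Hk | Hk]; [| lra].
  assert (1 <= INR k) by (apply (le_INR 1); lia).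
  split; [left; apply Rinv_0_lt_compat; lra |].
  rewrite <- Rinv_1. apply Rinv_le_contravar; lra.
Qed.

Lemma PS_derive_log_tail_coef_bounds (n k : nat) :
  0 <= PS_derive (log_tail_coef n) k <= 1.
Proof.
  unfold PS_derive, log_tail_coef. destruct (Nat.ltb_spec n (S k)) as [Hk | Hk].
  - rewrite Rinv_r by (apply not_0_INR; lia). lra.
  - rewrite Rmult_0_r. lra.
Qed.

Lemma CV_radius_gt_of_bounded (a : nat -> R) (x : R) :
  (forall k, Rabs (a k) <= 1) -> Rabs x < 1 -> Rbar_lt (Rabs x) (CV_radius a).
Proof.
  intros Ha Hx.
  destruct (CV_radius_bounded a) as [Hub _].
  assert (H1 : Rbar_le 1 (CV_radius a)).
  { apply Hub. exists 1. intros k. rewrite pow1, Rmult_1_r. apply Ha. }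
  destruct (CV_radius a) as [r | |]; simpl in *; lra || exact I || contradiction.
Qed.

Lemma CV_radius_log_tail_coef_gt (n : nat) (x : R) :
  Rabs x < 1 -> Rbar_lt (Rabs x) (CV_radius (log_tail_coef n)).
Proof.
  apply CV_radius_gt_of_bounded. intros k.
  generalize (log_tail_coef_bounds n k). intros. rewrite Rabs_pos_eq; lra.
Qed.

Lemma log_tail_PSeries (n : nat) (x : R) : 0 <= x < 1 ->
  log_tail n x = PSeries (log_tail_coef n) x.
Proof.
  intros Hx. unfold PSeries, log_tail.
  rewrite (Series_incr_n (fun k => log_tail_coef n k * x ^ k) (n + 1)); [| lia |].
  - replace (Init.Nat.pred (n + 1)) with n by lia.
    rewrite sum_eq_R0, Rplus_0_l.
    + apply Series_ext. intros j. unfold log_tail_coef.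
      destruct (Nat.ltb_spec n (n + 1 + j)); [unfold Rdiv; ring | lia].
    + intros k Hk. unfold log_tail_coef.
      destruct (Nat.ltb_spec n k); [lia | ring].
  - apply ex_series_Rabs, CV_disk_inside, CV_radius_log_tail_coef_gt.
    rewrite Rabs_pos_eq; lra.
Qed.

Lemma PSeries_derive_log_tail_coef_le (n : nat) (x : R) : 0 <= x < 1 ->
  PSeries (PS_derive (log_tail_coef n)) x <= / (1 - x).
Proof.
  intros Hx. unfold PSeries.
  rewrite <- (is_series_unique _ _ (is_series_geom x ltac:(rewrite Rabs_pos_eq; lra))).
  apply Series_le.
  - intros k. generalize (PS_derive_log_tail_coef_bounds n k).
    assert (0 <= x ^ k) by (apply pow_le; lra). nra.
  - apply ex_series_geom. rewrite Rabs_pos_eq; lra.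
Qed.

Lemma log_tail_add_ln_antitone (n : nat) (u v : R) : 0 <= u <= v -> v < 1 ->
  log_tail n v + ln (1 - v) <= log_tail n u + ln (1 - u).
Proof.
  intros Huv Hv.
  rewrite !log_tail_PSeries by lra.
  enough (- PSeries (log_tail_coef n) u - ln (1 - u)
          <= - PSeries (log_tail_coef n) v - ln (1 - v)) by lra.
  apply (le_of_is_derive_nonneg (fun t => - PSeries (log_tail_coef n) t - ln (1 - t))
           (fun t => - PSeries (PS_derive (log_tail_coef n)) t + / (1 - t)));
    [lra | |].
  - intros t Ht.
    assert (Hr : Rbar_lt (Rabs t) (CV_radius (log_tail_coef n))).
    { apply CV_radius_log_tail_coef_gt. rewrite Rabs_pos_eq; lra. }
    auto_derive.
    + split; [apply ex_derive_PSeries, Hr | split; [lra | exact I]].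
    + rewrite Derive_PSeries by exact Hr. field. lra.
  - intros t Ht. generalize (PSeries_derive_log_tail_coef_le n t ltac:(lra)). lra.
Qed.

Lemma log_tail_lt_neg_ln (n : nat) (x : R) : (1 <= n)%nat -> 0 <= x < 1 ->
  INR (n + 1) * (1 - x) < / exp 1 ->
  log_tail n x < - ln (INR (n + 1) * (1 - x)).
Proof.
  intros Hn Hx Hp.
  set (N := INR (n + 1)) in *.
  assert (HN : 2 <= N) by (apply (le_INR 2); lia).
  assert (HE : 2 <= exp 1) by (generalize (exp_ineq1_le 1); lra).
  assert (HeN : / (exp 1 * N) < 1 / 2).
  { rewrite Rinv_mult. apply (Rmult_lt_reg_l (exp 1 * N)); [nra |].
    field_simplify; nra. }
  set (x0 := 1 - / (exp 1 * N)).
  assert (Hx0 : 0 <= x0 < 1).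
  { assert (0 < / (exp 1 * N)) by (apply Rinv_0_lt_compat; nra). unfold x0. lra. }
  assert (Hp0 : N * (1 - x0) = / exp 1) by (unfold x0; field; lra).
  assert (Hx0x : x0 <= x).
  { unfold x0. rewrite Rinv_mult.
    assert (E : N * (/ exp 1 * / N) = / exp 1) by (field; lra).
    enough (1 - x < / exp 1 * / N) by lra.
    apply (Rmult_lt_reg_l N); lra. }
  assert (Htail0 : log_tail n x0 < 1).
  { generalize (log_tail_lt_inv_exp_mul n x0 Hn Hx0). fold N. rewrite Hp0.
    rewrite Rinv_r by apply exp_neq_0. rewrite Rinv_1. intros H. apply H. lra. }
  assert (Hln0 : ln (1 - x0) = - 1 - ln N).
  { unfold x0. replace (1 - (1 - / (exp 1 * N))) with (/ (exp 1 * N)) by ring.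
    rewrite ln_Rinv, ln_mult, ln_exp by nra. ring. }
  generalize (log_tail_add_ln_antitone n x0 x (conj (proj1 Hx0) Hx0x) (proj2 Hx)).
  rewrite Hln0, ln_mult by lra. lra.
Qed.

Theorem proposition10 (n : nat) (z : C) :
  (1 <= n)%nat -> Cmod z < 1 ->
  let p := INR (n + 1) * (1 - Cmod z) in
  Cmod (Rtail n z) < mfun p.
Proof.
  intros Hn Hz p.
  assert (Hx : 0 <= Cmod z < 1) by (split; [apply Cmod_ge_0 | exact Hz]).
  apply (Rle_lt_trans _ _ _ (Cmod_Rtail_le n z Hz)).
  unfold mfun. destruct (Rle_dec (/ exp 1) p) as [Hge | Hlt].
  - apply log_tail_lt_inv_exp_mul; assumption.
  - apply Rnot_le_lt in Hlt.
    assert (Hp0 : 0 < p) by (apply Rmult_lt_0_compat; [apply lt_0_INR; lia | lra]).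
    assert (Hp1 : p < 1).
    { apply (Rlt_trans _ _ _ Hlt), (Rmult_lt_reg_l (exp 1)); [apply exp_pos |].
      rewrite Rinv_r by apply exp_neq_0. generalize (exp_ineq1_le 1). lra. }
    rewrite Rabs_left by (rewrite <- ln_1; apply ln_increasing; lra).
    apply log_tail_lt_neg_ln; assumption.
Qed.
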